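(* Let $(\sigma,(\mu^B_m))$ be an equilibrium of the disclosure game described in the context. Then there exists $q^*\in Q$ such that $q^B_x=q^*$ for almost every $x\in X$ with $\sigma(x)=\varnothing$.
   Context: Let $0<q_\ell<q_h<\infty$, $Q=[q_\ell,q_h]$, and let $c$ be a real number with $0<c<q_\ell$. Let $F$ be a probability distribution on $[0,1]$ with support $[0,1]$ admitting a twice continuously differentiable density $f:(0,1)\to\mathbb{R}_{>0}$. Define $r(v)=(1-F(v))/f(v)$ and $\psi(v)=v-r(v)$ on $(0,1)$, and assume $\psi'(v)>0$ whenever $\psi(v)>0$. For $q\in Q$, $p(q)$ is the unique maximizer over $p\in\mathbb{R}$ of $(p-c)\big(1-F(p/q)\big)$, and let $R(q)=(p(q)-c)\big(1-F(p(q)/q)\big)$. The quality $q$ is drawn from a prior $\mu\in\Delta(Q)$ with support $Q$. Seller's information structure $(X,\pi^S)$ consists of a measurable signal space $X$ with $\varnothing\notin X$ and $\pi^S:Q\to\Delta(X)$; on observing $x$, Seller forms the Bayesian posterior $\mu^S_x$; ''almost every $x$'' refers to the marginal distribution of the signal. A disclosure strategy is a measurable $\sigma:X\to X\cup\{\varnothing\}$ with $\sigma(x)\in\{x,\varnothing\}$ for all $x$. Buyer's beliefs are $(\mu^B_m)_{m\in X\cup\{\varnothing\}}$ with posterior means $q^B_m=\mathbb{E}_{\mu^B_m}[q]$. A pair $(\sigma,(\mu^B_m))$ is an equilibrium if (i) for every $x\in X$, $\sigma(x)\in\arg\max_{m\in\{x,\varnothing\}} R(q^B_m)$; and (ii)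 $\mu^B_m=\mu^S_m$ for $m\in X$, and $\mu^B_\varnothing=\mathbb{E}[\mu^S_x\mid\sigma(x)=\varnothing]$ when this conditional expectation is well defined (otherwise $\mu^B_\varnothing$ is arbitrary). *)

From HB Require Import structures.
From mathcomp Require Import all_boot all_order all_algebra.
From mathcomp Require Import all_classical all_reals all_analysis.
From mathcomp Require Import measurable_realfun.
Set Implicit Arguments. Unset Strict Implicit. Unset Printing Implicit Defensive.
Import Order.TTheory GRing.Theory Num.Theory.
Import numFieldNormedType.Exports.
Local Open Scope classical_set_scope.
Local Open Scope ring_scope.

Section defs.
Context {R : realType}.

Definition profit (F : R -> R) (c q p : R) : R := (p - c) * (1 - F (p / q)).

Definition unique_maximizer (F : R -> R) (c q pq : R) : Prop :=
  (forall p', profit F c q p' <= profit F c q pq) /\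
  (forall p', (forall p'', profit F c q p'' <= profit F c q p') -> p' = pq).

Definition revenue (F : R -> R) (c : R) (p : R -> R) (q : R) : R :=
  profit F c q (p q).

Definition hazr (F f : R -> R) (v : R) : R := (1 - F v) / f v.
Definition psi (F f : R -> R) (v : R) : R := v - hazr F f v.

Definition cdf_with_density (F f : R -> R) : Prop :=
  (forall v, v <= 0 -> F v = 0) /\
  (forall v, 1 <= v -> F v = 1) /\
  (forall v, 0 <= v <= 1 ->
     (F v)%:E = (\int[lebesgue_measure]_(x in `[0%R, v]) (f x)%:E)%E).

Definition positive_C2_on01 (f : R -> R) : Prop :=
  forall v, 0 < v < 1 ->
    [/\ 0 < f v, derivable f v 1, derivable (derive1 f) v 1
      & {for v, continuous (derive1 (derive1 f))}].

Definition support_is (mu : probability R R) (a b : R) : Prop :=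
  mu `[a, b]%classic = 1%E /\
  (forall x, a <= x <= b -> forall e : R, 0 < e -> (0 < mu (ball x e))%E).

Definition pmean (nu : probability R R) : R :=
  fine (\int[nu]_q (q%:E))%E.

Variables (d : measure_display) (X : measurableType d).

Definition marg (ql qh : R) (mu : probability R R) (pi : R -> probability X R)
  (B : set X) : \bar R :=
  (\int[mu]_(q in `[ql, qh]%classic) pi q B)%E.

Definition marg_int (ql qh : R) (mu : probability R R) (pi : R -> probability X R)
  (B : set X) (g : X -> \bar R) : \bar R :=
  (\int[mu]_(q in `[ql, qh]%classic) \int[pi q]_(x in B) g x)%E.

End defs.

(* Since f > 0, the cdf F is strictly increasing on (0, 1], so charging the
   optimal price p(q1) to a buyer who believes in a higher quality q2 earns
   strictly more: the optimal revenue R is strictly increasing on Q.  Hence a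
   seller who withholds the signal x has posterior mean q_x at most the mean
   q* that the buyer attributes to non-disclosure.  Bayes consistency makes q*
   the average of q_x over the non-disclosure event, and a nonnegative
   function q* - q_x with zero average vanishes almost everywhere. *)

From HB Require Import structures.
From mathcomp Require Import all_boot all_order all_algebra.
From mathcomp Require Import all_classical all_reals all_analysis.
From mathcomp Require Import measurable_realfun.
From mathcomp Require Import lra.
Import Order.TTheory GRing.Theory Num.Theory.
Import numFieldNormedType.Exports.
Local Open Scope classical_set_scope.
Local Open Scope ring_scope.
Set Implicit Arguments. Unset Strict Implicit. Unset Printing Implicit Defensive.

Section null_integral.
Context d (T : measurableType d) (R : realType).
Variables (m : {measure set T -> \bar R}) (D : set T) (f : T -> \bar R).
Hypotheses (mD : measurable D) (mf : measurable_fun D f).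
Local Open Scope ereal_scope.

Lemma ge0_integral_eq0_null : (forall x, D x -> 0 <= f x) ->
  \int[m]_(x in D) f x = 0 -> m (D `&` [set x | f x != 0]) = 0.
Proof.
move=> f0 If0.
have /(ae_eq_integral_abs m mD mf).1 : \int[m]_(x in D) `|f x| = 0.
  by rewrite -If0; apply: eq_integral => x /[1!inE] /f0 /gee0_abs.
case=> N [mN N0 DfN]; apply: (subset_measure0 (emeasurable_neq mD mf 0) mN _ N0).
by move=> x [Dx /eqP fx0]; apply: DfN => /= /(_ Dx).
Qed.

Lemma null_integral_eq0 : m (D `&` [set x | f x != 0]) = 0 ->
  \int[m]_(x in D) f x = 0.
Proof.
move=> N0; transitivity (\int[m]_(x in D) cst 0 x); last exact: integral0.
apply: ae_eq_integral => //.
exists (D `&` [set x | f x != 0]); split => //; first exact: emeasurable_neq.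
by move=> x /= /not_implyP [Dx /eqP fx0].
Qed.

End null_integral.

Lemma measurable_neq {R : realType} d (T : measurableType d) (D : set T)
    (g : T -> R) (a : R) :
  measurable D -> measurable_fun D g -> measurable (D `&` [set x | g x != a]).
Proof.
move=> mD mg; have -> : [set x | g x != a] = [set x | (g x)%:E != a%:E].
  by apply/seteqP; split => x /=; rewrite eqe.
by apply: emeasurable_neq => //; exact/measurable_EFinP.
Qed.

Section cdf.
Context {R : realType}.
Variables (F f : R -> R).
Hypotheses (hF : cdf_with_density F f) (hf : positive_C2_on01 f).
Local Notation leb := (@lebesgue_measure R).

Lemma measurable_density : measurable_fun (`]0%R, 1%R[%classic : set R) f.
Proof.
apply: open_continuous_measurable_fun; first exact: interval_open.
move=> x /[1!inE] /=; rewrite in_itv /= => x01.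
have [_ dx _ _] := hf x01.
by apply/differentiable_continuous; rewrite -derivable1_diffP.
Qed.

Lemma measurable_density_itv (a b : R) : 0 <= a -> b <= 1 ->
  measurable_fun (`]a, b[%classic : set R) (fun x => (f x)%:E).
Proof.
move=> a0 b1; apply/measurable_EFinP.
apply: measurable_funS measurable_density => //.
by apply: subset_itv; rewrite bnd_simp.
Qed.

Lemma density_gt0 (v : R) : 0 < v < 1 -> 0 < f v.
Proof. by case/hf. Qed.

Lemma cdf_integral_oo (v : R) : 0 < v <= 1 ->
  (F v)%:E = (\int[leb]_(x in `]0%R, v[) (f x)%:E)%E.
Proof.
move=> /andP[v0 v1]; have [_ [_ ->]] := hF; last by rewrite ltW.
by rewrite (@integral_itv_bndoo _ 0%R v _ true false) //; exact: measurable_density_itv.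
Qed.

Lemma integral_density_gt0 (a b : R) : 0 <= a -> a < b -> b <= 1 ->
  (0 < \int[leb]_(x in `]a, b[) (f x)%:E)%E.
Proof.
move=> a0 ab b1.
have fpos x : `]a, b[%classic x -> 0 < f x.
  rewrite /= in_itv /= => /andP[ax xb]; apply: density_gt0.
  by rewrite (le_lt_trans a0 ax) (lt_le_trans xb b1).
have f0 x : `]a, b[%classic x -> (0 <= (f x)%:E)%E.
  by move=> /fpos /ltW; rewrite lee_fin.
rewrite lt0e integral_ge0 ?andbT //; apply/eqP => I0.
have : leb `]a, b[%classic = 0.
  have <- : `]a, b[%classic `&` [set x | (f x)%:E != 0%E] = `]a, b[%classic.
    by apply/setIidl => x /fpos /gt_eqF /=; rewrite eqe => ->.
  exact: (@ge0_integral_eq0_null _ _ _ leb _ (fun x => (f x)%:E) (measurable_itv _)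
    (measurable_density_itv a0 b1) f0 I0).
rewrite lebesgue_measure_itv /= lte_fin ab -EFinB => /eqP.
by rewrite eqe subr_eq0 gt_eqF.
Qed.

Lemma cdf_ltr (a b : R) : 0 < a -> a < b -> b <= 1 -> F a < F b.
Proof.
move=> a0 ab b1; have a1 : a <= 1 := ltW (lt_le_trans ab b1).
have f0 x : (`]0%R, b[%classic : set R) x -> (0 <= (f x)%:E)%E.
  rewrite /= in_itv /= lee_fin => /andP[x0 xb].
  by rewrite ltW // density_gt0 // x0 (lt_le_trans xb b1).
have split0b : `]0%R, b[%classic = `]0%R, a] `|` `]a, b[.
  by rewrite -itv_bndbnd_setU // bnd_simp ltW.
have Ia_fin : (\int[leb]_(x in `]0%R, a[) (f x)%:E)%E \is a fin_num.
  by rewrite -cdf_integral_oo ?a0.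
rewrite -lte_fin !cdf_integral_oo ?a0 ?a1 ?(lt_trans a0 ab) ?b1 // split0b.
rewrite ge0_integral_setU //; last 3 first.
- by rewrite -split0b; exact: measurable_density_itv.
- by rewrite -split0b.
- apply/disj_setPS => x [] /=; rewrite !in_itv /= => /andP[_ xa] /andP[ax _].
  by move: (lt_le_trans ax xa); rewrite ltxx.
rewrite (@integral_itv_bndoo _ 0%R a _ false false); last first.
  exact: measurable_density_itv.
by rewrite lteDl // integral_density_gt0 // ltW.
Qed.

Lemma cdf_le1 (v : R) : F v <= 1.
Proof.
have [v0|v0] := leP v 0; first by rewrite hF.1.
have [v1|v1] := leP 1 v; first by rewrite hF.2.1.
by rewrite -(hF.2.1 1 (lexx _)) ltW // cdf_ltr.
Qed.

Lemma cdf_lt1 (v : R) : 0 < v < 1 -> F v < 1.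
Proof. by move=> /andP[v0 v1]; rewrite -(hF.2.1 1 (lexx _)) cdf_ltr. Qed.

End cdf.

Section revenue.
Context {R : realType}.
Variables (F f : R -> R) (c : R).
Hypotheses (hF : cdf_with_density F f) (hf : positive_C2_on01 f) (c0 : 0 < c).

Lemma profit_max_gt0 (q pq : R) : c < q ->
  (forall p', profit F c q p' <= profit F c q pq) -> 0 < profit F c q pq.
Proof.
move=> cq pq_max; have q0 : 0 < q := lt_trans c0 cq.
set m := (c + q) / 2.
have [cm mq] : c < m /\ m < q by rewrite /m ltr_pdivlMr // ltr_pdivrMr //; lra.
apply: lt_le_trans (pq_max m); rewrite /profit mulr_gt0 ?subr_gt0 //.
by rewrite (cdf_lt1 hF hf) // divr_gt0 ?(lt_trans c0 cm) //= ltr_pdivrMr ?mul1r.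
Qed.

Lemma profit_ltr_quality (q1 q2 P : R) : 0 < q1 -> q1 < q2 ->
  0 < profit F c q1 P -> profit F c q1 P < profit F c q2 P.
Proof.
move=> q10 q12 Ppos; have q20 := lt_trans q10 q12.
have F_le1 := cdf_le1 hF hf.
have [Pc F1] : 0 < P - c /\ F (P / q1) < 1.
  move: Ppos; rewrite /profit; have := F_le1 (P / q1); rewrite -subr_ge0.
  rewrite le_eqVlt => /predU1P[<-|F1]; first by rewrite mulr0 ltxx.
  by rewrite pmulr_lgt0 // -[F _ < 1]subr_gt0.
have P0 : 0 < P by rewrite (lt_trans c0) // -subr_gt0.
have Pq1 : P / q1 < 1.
  by rewrite ltNge; apply: contraTN F1 => /(hF.2.1); rewrite -leNgt => ->.
have Flt : F (P / q2) < F (P / q1).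
  apply: (cdf_ltr hF hf); rewrite ?divr_gt0 ?ltW //.
  by rewrite ltr_pM2l // ltf_pV2.
by rewrite /profit ltr_pM2l //; lra.
Qed.

Variables (ql qh : R) (p : R -> R).
Hypotheses (cql : c < ql)
  (p_max : forall q, ql <= q <= qh -> unique_maximizer F c q (p q)).

Lemma revenue_ltr (q1 q2 : R) : ql <= q1 -> q1 < q2 -> q2 <= qh ->
  revenue F c p q1 < revenue F c p q2.
Proof.
move=> lq1 q12 q2h.
have [max1 _] : unique_maximizer F c q1 (p q1).
  by apply: p_max; rewrite lq1 ltW // (lt_le_trans q12 q2h).
have [max2 _] : unique_maximizer F c q2 (p q2).
  by apply: p_max; rewrite q2h ltW // (le_lt_trans lq1 q12).
have cq1 := lt_le_trans cql lq1.
apply: lt_le_trans (max2 (p q1)).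
exact: profit_ltr_quality (lt_trans c0 cq1) q12 (profit_max_gt0 cq1 max1).
Qed.

Lemma revenue_le_quality (q1 q2 : R) : ql <= q1 <= qh -> ql <= q2 <= qh ->
  revenue F c p q1 <= revenue F c p q2 -> q1 <= q2.
Proof.
move=> /andP[lq1 q1h] /andP[lq2 _]; apply: contraTT; rewrite -!ltNge => q21.
exact: revenue_ltr.
Qed.

End revenue.

Section kernel_integral.
Context {R : realType} dY dX (Y : measurableType dY) (X : measurableType dX).
Variables (S : Y -> {measure set X -> \bar R}) (E : set Y) (D : set X).
Hypotheses (mE : measurable E) (mD : measurable D)
  (mS : forall U, measurable U -> measurable_fun E (fun y => S y U)).
Local Open Scope ereal_scope.

Lemma measurable_fun_kernel_integral (k : X -> \bar R) :
  (forall x, 0 <= k x) -> measurable_fun setT k ->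
  measurable_fun E (fun y => \int[S y]_(x in D) k x).
Proof.
move=> k0 mk.
(* measurable_fun_integral_kernel needs measurability on all of Y *)
pose S' : Y -> {measure set X -> \bar R} := fun y => if y \in E then S y else mzero.
have mS' U : measurable U -> measurable_fun setT (fun y => S' y U).
  move=> mU; have := (measurable_restrictT (fun y => S y U) mE).1 (mS mU).
  by apply: eq_measurable_fun => y _; rewrite /S' /patch; case: ifP.
have : measurable_fun setT (fun y => \int[S' y]_x (k \_ D) x).
  apply: (measurable_fun_integral_kernel mS').
  - by move=> x; rewrite /patch; case: ifP.
  - exact/(measurable_restrictT k mD)/measurable_funTS.
move=> /(measurable_funS measurableT (subsetT E)).
apply: eq_measurable_fun => y /[1!inE] Ey.
by rewrite /S' mem_set // [RHS]integral_mkcond.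
Qed.

Lemma monotone_convergence_kernel (g_ : (X -> \bar R)^nat) :
  (forall n, measurable_fun setT (g_ n)) -> (forall n x, 0 <= g_ n x) ->
  (forall x, nondecreasing_seq (g_ ^~ x)) ->
  let G_ n y := \int[S y]_(x in D) g_ n x in
  [/\ forall n, measurable_fun E (G_ n), forall n y, 0 <= G_ n y,
      forall y, nondecreasing_seq (G_ ^~ y)
    & forall y, \int[S y]_(x in D) limn (g_ ^~ x) = limn (G_ ^~ y)].
Proof.
move=> mg g0 nd_g G_; split => [n|n y|y n m nm|y].
- exact: measurable_fun_kernel_integral.
- by apply: integral_ge0 => x _.
- apply: ge0_le_integral => //; try exact: measurable_funTS.
  by move=> x _; exact: nd_g.
- apply: monotone_convergence => //.
  by move=> n; exact: measurable_funTS.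
Qed.

End kernel_integral.

Section simple_integral.
Context {R : realType} d (T : measurableType d).
Import HBNNSimple.
Local Open Scope ereal_scope.

Lemma integral_nnsfunE (m : {measure set T -> \bar R}) (f : {nnsfun T >-> R}) :
  \int[m]_z (f z)%:E = \sum_(r \in range f) r%:E * m (f @^-1` [set r]).
Proof. by rewrite integral_nnsfun // patch_setT sintegralE. Qed.

Lemma integral_fsumZl (m : {measure set T -> \bar R}) (E : set T) (A : set R)
    (G : R -> T -> \bar R) : measurable E -> finite_set A ->
  (forall r, measurable_fun E (G r)) -> (forall r y, 0 <= G r y) ->
  (forall r, (r < 0)%R -> G r = cst 0) ->
  \int[m]_(y in E) (\sum_(r \in A) r%:E * G r y) =
  \sum_(r \in A) r%:E * \int[m]_(y in E) G r y.
Proof.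
move=> mE finA mG G0 Gneg.
have rG0 r y : 0 <= r%:E * G r y.
  by have [r0|/Gneg->] := leP 0%R r; [rewrite mule_ge0|rewrite mule0].
rewrite ge0_integral_fsum //; last by move=> r; exact: measurable_funeM.
apply: eq_fsbigr => r _; have [r0|/Gneg Gr0] := leP 0%R r.
  by rewrite ge0_integralZl.
have -> : (fun y => r%:E * G r y) = cst 0 by apply/funext => y; rewrite Gr0 mule0.
by rewrite Gr0 !integral0 mule0.
Qed.

End simple_integral.

Section mixture.
Context {R : realType} dY dX dZ (Y : measurableType dY) (X : measurableType dX)
  (Z : measurableType dZ).
Import HBNNSimple.
Local Open Scope ereal_scope.
Variables (lam : {measure set Y -> \bar R}) (S1 : Y -> {measure set X -> \bar R})
  (S2 : X -> {measure set Z -> \bar R}) (nu : {measure set Z -> \bar R}).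
Variables (E : set Y) (D : set X).
Hypotheses (mE : measurable E) (mD : measurable D)
  (mS1 : forall U, measurable U -> measurable_fun E (fun y => S1 y U))
  (mS2 : forall U, measurable U -> measurable_fun setT (fun x => S2 x U))
  (nuE : forall U, measurable U ->
     nu U = \int[lam]_(y in E) \int[S1 y]_(x in D) S2 x U).

Lemma integral_mixture_nnsfun (f : {nnsfun Z >-> R}) :
  \int[nu]_z (f z)%:E = \int[lam]_(y in E) \int[S1 y]_(x in D) \int[S2 x]_z (f z)%:E.
Proof.
have finf : finite_set (range f) by exact: fimfunP.
have mf r : measurable (f @^-1` [set r]) by exact: measurable_sfunP.
have fneg r : (r < 0)%R ->
    forall S : {measure set Z -> \bar R}, S (f @^-1` [set r]) = 0.
  by move=> /(preimage_nnfun0 f) -> S; rewrite measure0.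
rewrite integral_nnsfunE.
under eq_integral => y _.
  under eq_integral do rewrite integral_nnsfunE.
  rewrite (@integral_fsumZl _ _ _ _ _ _ (fun r x => S2 x (f @^-1` [set r]))) //.
  - over.
  - by move=> r; apply: measurable_funTS; exact: mS2.
  - by move=> r /fneg Sr0; apply/funext => x; rewrite Sr0.
rewrite /= integral_fsumZl //.
- by apply: eq_fsbigr => r _; rewrite nuE.
- move=> r; apply: (measurable_fun_kernel_integral mE mD mS1) => //.
  exact: mS2.
- by move=> r y; apply: integral_ge0.
- move=> r /fneg Sr0; apply/funext => y.
  by under eq_integral do rewrite Sr0; rewrite integral0.
Qed.

Lemma integral_mixture (phi : Z -> \bar R) : (forall z, 0 <= phi z) ->
  measurable_fun setT phi ->
  \int[nu]_z phi z = \int[lam]_(y in E) \int[S1 y]_(x in D) \int[S2 x]_z phi z.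
Proof.
move=> phi0 mphi.
pose g_ n z := (nnsfun_approx measurableT mphi n z)%:E.
have mg n : measurable_fun setT (g_ n) by exact/measurable_EFinP.
have g0 n z : 0 <= g_ n z by rewrite lee_fin.
have nd_g z : nondecreasing_seq (g_ ^~ z).
  by move=> n m nm; rewrite lee_fin; exact/lefP/nd_nnsfun_approx.
have phiE : phi = fun z => limn (g_ ^~ z).
  by apply/funext => z; apply/esym/cvg_lim => //; exact: cvg_nnsfun_approx.
have [mG2 G20 ndG2 limG2] :=
  monotone_convergence_kernel measurableT measurableT mS2 mg g0 nd_g.
have [mG3 G30 ndG3 limG3] := monotone_convergence_kernel mE mD mS1 mG2 G20 ndG2.
transitivity
  (limn (fun n => \int[lam]_(y in E) \int[S1 y]_(x in D) \int[S2 x]_z g_ n z)).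
  rewrite phiE monotone_convergence //; congr (limn _); apply/funext => n.
  exact: integral_mixture_nnsfun.
rewrite -monotone_convergence //; apply: eq_integral => y _.
by rewrite -limG3; apply: eq_integral => x _; rewrite -limG2 phiE.
Qed.

End mixture.

Section kernel_null.
Context {R : realType} dY dX (Y : measurableType dY) (X : measurableType dX).
Variables (lam : {measure set Y -> \bar R}) (S : Y -> {measure set X -> \bar R}).
Variables (E : set Y) (D : set X).
Hypotheses (mE : measurable E) (mD : measurable D)
  (mS : forall U, measurable U -> measurable_fun E (fun y => S y U)).
Local Open Scope ereal_scope.

Lemma kernel_integral_eq0_null (h : X -> \bar R) :
  (forall x, 0 <= h x) -> measurable_fun setT h ->
  \int[lam]_(y in E) \int[S y]_(x in D) h x = 0 ->
  \int[lam]_(y in E) S y (D `&` [set x | h x != 0]) = 0.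
Proof.
move=> h0 mh Ih0.
have mhD : measurable_fun D h := measurable_funTS mh.
have mN : measurable (D `&` [set x | h x != 0]) by exact: emeasurable_neq.
have mH := measurable_fun_kernel_integral mE mD mS h0 mh.
have lam0 :=
  ge0_integral_eq0_null mE mH (fun y _ => integral_ge0 _ (fun x _ => h0 x)) Ih0.
apply: null_integral_eq0 => //; first exact: mS.
apply: (subset_measure0 (emeasurable_neq mE (mS mN) 0) (emeasurable_neq mE mH 0) _ lam0).
move=> y [Ey SyN]; split => //; apply: contra SyN => /eqP Hy0; apply/eqP.
exact: ge0_integral_eq0_null mD mhD (fun x _ => h0 x) Hy0.
Qed.

Lemma kernel_mean_eq_bound_null (g : X -> R) (a : R) :
  measurable_fun setT g -> (forall x, (0 <= g x)%R) ->
  (forall x, D x -> (g x <= a)%R) ->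
  (0 <= a)%R -> \int[lam]_(y in E) S y D \is a fin_num ->
  \int[lam]_(y in E) \int[S y]_(x in D) (g x)%:E = a%:E * \int[lam]_(y in E) S y D ->
  \int[lam]_(y in E) S y (D `&` [set x | g x != a]) = 0.
Proof.
move=> mg g0 g_le a0 finD mean_a.
pose h x := (Num.max (a - g x) 0)%:E.
have h0 x : 0 <= h x by rewrite lee_fin le_max lexx orbT.
have mh : measurable_fun setT h.
  by apply/measurable_EFinP/measurable_maxr => //; exact: measurable_funB.
have mgE : measurable_fun setT (fun x => (g x)%:E) by exact/measurable_EFinP.
have ge0_gE x : 0 <= (g x)%:E by rewrite lee_fin.
have aE y : \int[S y]_(x in D) a%:E =
    \int[S y]_(x in D) (g x)%:E + \int[S y]_(x in D) h x.
  rewrite -ge0_integralD //; try exact: measurable_funTS.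
  apply: eq_integral => x /[1!inE] Dx.
  by rewrite /h max_l ?subr_ge0 ?g_le // -EFinD addrC subrK.
have Ih0 : \int[lam]_(y in E) \int[S y]_(x in D) h x = 0.
  have : \int[lam]_(y in E) \int[S y]_(x in D) a%:E =
      a%:E * \int[lam]_(y in E) S y D + \int[lam]_(y in E) \int[S y]_(x in D) h x.
    rewrite -mean_a -ge0_integralD //.
    - by apply: eq_integral => y _; exact: aE.
    - by move=> y _; exact: integral_ge0.
    - exact: measurable_fun_kernel_integral.
    - by move=> y _; exact: integral_ge0.
    - exact: measurable_fun_kernel_integral.
  under eq_integral do rewrite integral_cst //.
  rewrite ge0_integralZl //; last exact: mS.
  set aD := a%:E * _; have finaD : aD \is a fin_num by rewrite fin_numM.
  by move/(congr1 (fun z => z - aD)); rewrite addeAC !subee // add0e.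
have hE x : D x -> (h x != 0) = (g x != a).
  by move=> Dx; rewrite /h eqe max_l ?subr_ge0 ?g_le // subr_eq0 eq_sym.
have -> : D `&` [set x | g x != a] = D `&` [set x | h x != 0].
  by apply/seteqP; split => x [Dx]; rewrite /= hE.
exact: kernel_integral_eq0_null.
Qed.

End kernel_null.

Section posterior_mean.
Context {R : realType}.
Variables (a b : R).
Hypotheses (a0 : 0 <= a) (ab : a <= b).
Local Open Scope ereal_scope.

(* Against beliefs concentrated on [a, b], clamping does not change the mean
   but makes the integrand nonnegative on all of R. *)
Definition clamp (q : R) : R := Num.min (Num.max q a) b.

Lemma clamp_id (q : R) : (a <= q <= b)%R -> clamp q = q.
Proof. by move=> /andP[aq qb]; rewrite /clamp (max_l aq) (min_l qb). Qed.

Lemma clamp_itv (q : R) : (a <= clamp q <= b)%R.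
Proof. by rewrite /clamp le_min ab le_max lexx orbT ge_min lexx orbT. Qed.

Lemma measurable_clamp : measurable_fun setT (fun q => (clamp q)%:E).
Proof.
apply/measurable_EFinP.
have -> : clamp = ((id \max cst a) \min cst b)%R by [].
by apply: measurable_minr => //; exact: measurable_maxr.
Qed.

Lemma clamp_ge0 (q : R) : 0 <= (clamp q)%:E.
Proof. by rewrite lee_fin (le_trans a0) // (andP (clamp_itv q)).1. Qed.

Lemma pmean_clampE (nu : probability R R) : nu `[a, b]%classic = 1 ->
  \int[nu]_q (clamp q)%:E = (pmean nu)%:E /\ (a <= pmean nu <= b)%R.
Proof.
move=> nu_ab.
have intE : \int[nu]_q q%:E = \int[nu]_q (clamp q)%:E.
  apply: ae_eq_integral => //; first exact: measurable_clamp.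
  exists (~` `[a, b]%classic); split.
  - exact: measurableC (measurable_itv _).
  - by have := probability_setC nu (measurable_itv `[a, b]); rewrite nu_ab subee.
  - by move=> q nq qab; apply: nq => _; rewrite clamp_id.
have int_cst (r : R) : \int[nu]_q r%:E = r%:E.
  by rewrite integral_cst //= probability_setT mule1.
have lb : a%:E <= \int[nu]_q (clamp q)%:E.
  rewrite -[leLHS]int_cst; apply: ge0_le_integral => //.
    exact: measurable_clamp.
  by move=> q _; rewrite lee_fin (andP (clamp_itv q)).1.
have ub : \int[nu]_q (clamp q)%:E <= b%:E.
  rewrite -[leRHS]int_cst; apply: ge0_le_integral => //.
  - by move=> q _; exact: clamp_ge0.
  - exact: measurable_clamp.
  - by move=> q _; rewrite lee_fin (andP (clamp_itv q)).2.
have fin : \int[nu]_q (clamp q)%:E \is a fin_num.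
  by rewrite fin_numElt (lt_le_trans _ lb) ?ltNyr // (le_lt_trans ub) ?ltry.
have pmeanE : \int[nu]_q (clamp q)%:E = (pmean nu)%:E.
  by rewrite /pmean intE fineK.
by rewrite pmeanE in lb ub *; rewrite -!lee_fin lb ub.
Qed.

Lemma measurable_fun_pmean d (X : measurableType d) (K : X -> probability R R) :
  (forall A, measurable A -> measurable_fun setT (fun x => K x A)) ->
  (forall x, K x `[a, b]%classic = 1) -> measurable_fun setT (fun x => pmean (K x)).
Proof.
move=> mK K_ab.
have : measurable_fun setT (fun x => fine (\int[K x]_q (clamp q)%:E)).
  apply: measurableT_comp (fine_measurable measurableT) _.
  exact: (measurable_fun_integral_kernel
    (l := fun x => K x : {measure set R -> \bar R}) mK clamp_ge0 measurable_clamp).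
by apply: eq_measurable_fun => x _; rewrite (pmean_clampE (K_ab x)).1.
Qed.

Lemma pmean_mixture dY dX (Y : measurableType dY) (X : measurableType dX)
    (lam : {measure set Y -> \bar R}) (S : Y -> {measure set X -> \bar R})
    (E : set Y) (D : set X) (K : X -> probability R R) (nu : probability R R)
    (k : R) (k0 : (0 <= k)%R) :
  measurable E -> measurable D ->
  (forall U, measurable U -> measurable_fun E (fun y => S y U)) ->
  (forall A, measurable A -> measurable_fun setT (fun x => K x A)) ->
  (forall x, K x `[a, b]%classic = 1) -> nu `[a, b]%classic = 1 ->
  (forall A, measurable A ->
     nu A * k%:E = \int[lam]_(y in E) \int[S y]_(x in D) K x A) ->
  \int[lam]_(y in E) \int[S y]_(x in D) (pmean (K x))%:E = (pmean nu * k)%:E.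
Proof.
move=> mE mD mS mK K_ab nu_ab nuE.
have nukE A : measurable A -> mscale (NngNum k0) nu A =
    \int[lam]_(y in E) \int[S y]_(x in D) K x A.
  by move=> mA; rewrite /mscale /= muleC nuE.
transitivity (\int[lam]_(y in E) \int[S y]_(x in D) \int[K x]_q (clamp q)%:E).
  apply: eq_integral => y _; apply: eq_integral => x _.
  by rewrite (pmean_clampE (K_ab x)).1.
rewrite -(integral_mixture mE mD mS mK nukE clamp_ge0 measurable_clamp).
rewrite ge0_integral_mscale //=.
- by rewrite (pmean_clampE nu_ab).1 -EFinM mulrC.
- exact: measurable_clamp.
- by move=> q _; exact: clamp_ge0.
Qed.

End posterior_mean.

Section marginal.
Context {R : realType} d (X : measurableType d).
Variables (ql qh : R) (mu : probability R R) (pi : R -> probability X R).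
Hypotheses (mu_Q : mu `[ql, qh]%classic = 1%E)
  (mpi : forall B, measurable B -> measurable_fun `[ql, qh]%classic (fun q => pi q B)).
Local Open Scope ereal_scope.

Lemma marg_fin_num (B : set X) : measurable B -> marg ql qh mu pi B \is a fin_num.
Proof.
move=> mB; rewrite ge0_fin_numE; last exact: integral_ge0.
apply: (@le_lt_trans _ _ 1); last exact: ltry.
have -> : 1 = \int[mu]_(q in `[ql, qh]%classic) 1.
  by rewrite integral_cst // mul1e; exact/esym.
apply: ge0_le_integral => //; first exact: mpi.
by move=> q _; exact: probability_le1.
Qed.

End marginal.

Theorem lemma15
  (R : realType) (ql qh c : R) (F f : R -> R) (p : R -> R)
  (d : measure_display) (X : measurableType d)
  (mu : probability R R) (pi : R -> probability X R)
  (muS : X -> probability R R)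
  (sigma : X -> option X) (muB : option X -> probability R R) :
  (* quality space Q = [ql, qh], 0 < ql < qh, 0 < c < ql *)
  0 < ql -> ql < qh -> 0 < c -> c < ql ->
  (* F: distribution on [0,1], density f > 0 and C^2 on (0,1) *)
  cdf_with_density F f ->
  positive_C2_on01 f ->
  (* psi'(v) > 0 whenever psi(v) > 0 *)
  (forall v, 0 < v < 1 -> 0 < psi F f v -> 0 < derive1 (psi F f) v) ->
  (* p(q) is the unique maximizer of (p - c)(1 - F(p/q)) *)
  (forall q, ql <= q <= qh -> unique_maximizer F c q (p q)) ->
  (* prior mu in Delta(Q) with support Q *)
  support_is mu ql qh ->
  (* Seller's information structure: a Markov kernel Q -> Delta(X) *)
  (forall B, measurable B -> measurable_fun `[ql, qh]%classic (fun q => pi q B)) ->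
  (* Bayesian posteriors muS : X -> Delta(Q) (a version of the disintegration) *)
  (forall x, muS x `[ql, qh]%classic = 1%E) ->
  (forall A, measurable A -> measurable_fun setT (fun x => muS x A)) ->
  (forall A B, measurable A -> measurable B ->
     (\int[mu]_(q in `[ql, qh]%classic `&` A) pi q B)%E
     = marg_int ql qh mu pi B (fun x => muS x A)) ->
  (* disclosure strategy: sigma x in {x, none}, measurable *)
  (forall x, sigma x = Some x \/ sigma x = None) ->
  measurable [set x | sigma x = None] ->
  (* Buyer's beliefs lie in Delta(Q) *)
  (forall m, muB m `[ql, qh]%classic = 1%E) ->
  (* equilibrium condition (i): sigma x maximizes R(q^B_m) over m in {x, none} *)
  (forall x,
     revenue F c p (pmean (muB (Some x))) <= revenue F c p (pmean (muB (sigma x))) /\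
     revenue F c p (pmean (muB None)) <= revenue F c p (pmean (muB (sigma x)))) ->
  (* equilibrium condition (ii) *)
  (forall x, muB (Some x) = muS x) ->
  ((0 < marg ql qh mu pi [set x | sigma x = None])%E ->
     forall A, measurable A ->
       (muB None A * marg ql qh mu pi [set x | sigma x = None])%E
       = marg_int ql qh mu pi [set x | sigma x = None] (fun x => muS x A)) ->
  (* conclusion *)
  exists qs, ql <= qs <= qh /\
    exists N : set X, measurable N /\ marg ql qh mu pi N = 0%E /\
      (forall x, sigma x = None -> pmean (muB (Some x)) <> qs -> N x).
Proof.
move=> ql0 lqh c0 cql hF hf _ p_max [mu_Q _] mpi muS_Q mmuS _ _ mD muB_Q eq_i
  muB_some muB_none.
set D := [set x | sigma x = None] in mD muB_none *.
have [l0 lh] := (ltW ql0, ltW lqh).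
have [marg_le0|marg_gt0] := leP (marg ql qh mu pi D) 0%E.
  exists ql; split; first by rewrite lexx lh.
  exists D; split => //; split => //; apply/le_anti.
  by rewrite marg_le0; exact: integral_ge0.
pose qs := pmean (muB None); pose qx x := pmean (muS x).
have qsQ := (pmean_clampE l0 lh (muB_Q None)).2.
have qxQ x := (pmean_clampE l0 lh (muS_Q x)).2.
have mqx : measurable_fun setT qx := measurable_fun_pmean l0 lh mmuS muS_Q.
have qx_le x : D x -> qx x <= qs.
  move=> Dx; have [] := eq_i x; rewrite Dx muB_some => Rle _.
  exact: (revenue_le_quality hF hf c0 cql p_max (qxQ x) qsQ).
have k0 : 0 <= fine (marg ql qh mu pi D) by rewrite fine_ge0 ?integral_ge0.
have mean_qs : (\int[mu]_(q in `[ql, qh]%classic) \int[pi q]_(x in D) (qx x)%:E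
    = qs%:E * marg ql qh mu pi D)%E.
  rewrite -[in RHS](fineK (marg_fin_num mu_Q mpi mD)) -EFinM.
  apply: (pmean_mixture l0 lh k0 (measurable_itv _) mD mpi mmuS muS_Q (muB_Q None)).
  by move=> A mA; rewrite fineK ?muB_none ?marg_fin_num.
exists qs; split => //; exists (D `&` [set x | qx x != qs]); split; [|split].
- exact/measurable_neq/measurable_funTS.
- apply: (kernel_mean_eq_bound_null (measurable_itv _) mD mpi) => //.
  + by move=> x; rewrite (le_trans l0) // (andP (qxQ x)).1.
  + by rewrite (le_trans l0) // (andP qsQ).1.
  + exact: marg_fin_num.
- by move=> x Dx; rewrite muB_some => /eqP.
Qed.
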